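(* Let $R$ be a commutative ring with $1\neq 0$, $S\subseteq R$ a multiplicatively closed subset, and $M$ an $S$-comultiplication $R$-module. If $N$ is an $S$-copure submodule of $M$, then for every $s\in S$ the module $M/sN$ is an $S$-comultiplication $R$-module.
   Context: All rings are commutative with $1\neq 0$ and all modules are unital. A multiplicatively closed subset (m.c.s.) $S$ of $R$ is a subset with $0\notin S$, $1\in S$, and $ss'\in S$ for all $s,s'\in S$. For an ideal $I$ and submodule $L$, $(L:_M I)=\{m\in M: Im\subseteq L\}$ and $(0:_M I)=\{m\in M: Im=0\}$. $M$ is an $S$-comultiplication module if for each submodule $N$ of $M$ there exist $s\in S$ and an ideal $I$ of $R$ with $s(0:_M I)\subseteq N\subseteq (0:_M I)$. A submodule $L$ of $M$ is $S$-copure if there exists $s\in S$ such that $s(L:_M I)\subseteq L+(0:_M I)$ for every ideal $I$ of $R$. *)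

From HB Require Import structures.
From mathcomp Require Import all_boot all_order all_algebra.
Set Implicit Arguments. Unset Strict Implicit. Unset Printing Implicit Defensive.
Import GRing.Theory.
Local Open Scope ring_scope.

Section Defs.
Variable R : comNzRingType.

Definition mcs (S : R -> Prop) : Prop :=
  ~ S 0 /\ S 1 /\ (forall s t, S s -> S t -> S (s * t)).

Definition is_ideal (I : R -> Prop) : Prop :=
  I 0 /\ (forall a b, I a -> I b -> I (a + b)) /\ (forall r a, I a -> I (r * a)).

Variable M : lmodType R.

Definition is_submodule (N : M -> Prop) : Prop :=
  N 0 /\ (forall x y, N x -> N y -> N (x + y)) /\ (forall r x, N x -> N (r *: x)).

Definition annM (I : R -> Prop) : M -> Prop :=
  fun m => forall a, I a -> a *: m = 0.

Definition colonM (L : M -> Prop) (I : R -> Prop) : M -> Prop :=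
  fun m => forall a, I a -> L (a *: m).

Definition smulS (s : R) (N : M -> Prop) : M -> Prop :=
  fun m => exists n, N n /\ m = s *: n.

Definition addS (L K : M -> Prop) : M -> Prop :=
  fun m => exists l k, L l /\ K k /\ m = l + k.

Definition S_comultiplication (S : R -> Prop) : Prop :=
  forall N, is_submodule N ->
    exists s, S s /\ exists I, is_ideal I /\
      (forall m, annM I m -> N (s *: m)) /\ (forall m, N m -> annM I m).

Definition S_copure (S : R -> Prop) (L : M -> Prop) : Prop :=
  is_submodule L /\
  exists s, S s /\ forall I, is_ideal I ->
    forall m, colonM L I m -> addS L (annM I) (s *: m).

End Defs.

From HB Require Import structures.
From mathcomp Require Import all_boot all_order all_algebra.
Local Open Scope ring_scope.
Import GRing.Theory.
Set Implicit Arguments. Unset Strict Implicit. Unset Printing Implicit Defensive.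

(* Let f : M -> Q be surjective and linear with kernel sN, so
   that Q is a model of M/sN, and let K be a submodule of Q.  Its preimage
   f^-1(K) is a submodule of M, so the S-comultiplication property of M gives
   t in S and an ideal I with t(0 :_M I) <= f^-1(K) <= (0 :_M I).
   - Applying f to f^-1(K) <= (0 :_M I) gives K <= (0 :_Q I), because f is
     linear and surjective.
   - If q = f m lies in (0 :_Q I), then I m <= ker f <= N, i.e. m is in
     (N :_M I); copurity (with constant s') writes s'm = l + k with l in N
     and k in (0 :_M I).  Then (s s' t) m = (s t) l + s (t k), whose image
     under f is 0 + s f(t k), and f(t k) lies in K; hence (s s' t) q is in K. *)

Section LinearTransfer.
Variables (R : comNzRingType) (M Q : lmodType R) (f : {linear M -> Q}).

Lemma preimage_submodule (K : Q -> Prop) :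
  is_submodule K -> is_submodule (fun m => K (f m)).
Proof.
move=> [K0 [KD KZ]]; split; first by rewrite raddf0.
split; first by move=> x y Kx Ky; rewrite raddfD; apply: KD.
by move=> r x Kx; rewrite linearZ; apply: KZ.
Qed.

Lemma annM_image (I : R -> Prop) (m : M) :
  annM I m -> annM I (f m).
Proof. by move=> Im a Ia; rewrite -linearZ Im // raddf0. Qed.

Lemma colonM_of_kernel (N : M -> Prop) (I : R -> Prop) (m : M) :
  (forall x, f x = 0 -> N x) -> annM I (f m) -> colonM N I m.
Proof. by move=> kerN Im a Ia; apply: kerN; rewrite linearZ; apply: Im. Qed.

End LinearTransfer.

Lemma smulS_sub (R : comNzRingType) (M : lmodType R) (N : M -> Prop) s m :
  is_submodule N -> smulS s N m -> N m.
Proof. by move=> [_ [_ NZ]] [n [Nn ->]]; apply: NZ. Qed.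

Theorem theorem3p4 (R : comNzRingType) (S : R -> Prop) (M : lmodType R)
    (N : M -> Prop) :
  mcs S -> @S_comultiplication R M S ->
  S_copure S N ->
  forall s, S s ->
  forall (Q : lmodType R) (f : {linear M -> Q}),
    (forall q : Q, exists m : M, f m = q) ->
    (forall m : M, f m = 0 <-> smulS s N m) ->
    @S_comultiplication R Q S.
Proof.
move=> [_ [_ Smul]] comM [subN [s' [Ss' copN]]] s Ss Q f fsurj fker K subK.
have [t [St [I [idI [tannK Kann]]]]] := comM _ (preimage_submodule f subK).
have kerN x : f x = 0 -> N x by move/fker; apply: smulS_sub.
exists (s * s' * t); split; first exact: Smul (Smul _ _ Ss Ss') St.
exists I; split=> //; split=> q; have [m <-] := fsurj q; last first.
  by move=> Km; apply/annM_image/Kann.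
move=> Im; have [l [k [Nl [Ik Esm]]]] := copN I idI m (colonM_of_kernel kerN Im).
have image_decomp : (s * s' * t) *: f m = f ((s * t) *: l) + s *: f (t *: k).
  rewrite -linearZ -[s *: f _]linearZ -raddfD; congr (f _).
  by rewrite [s *: _]scalerA -scalerDr -Esm scalerA mulrAC.
rewrite image_decomp.
have -> : f ((s * t) *: l) = 0.
  by apply/fker; exists (t *: l); split; [case: subN => _ [_]; apply | rewrite scalerA].
by rewrite add0r; case: subK => _ [_ KZ]; apply/KZ/tannK.
Qed.
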